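(* Let $V$ be a finite set, $f:2^V\to\mathbb{R}_+$ nonnegative submodular with $f(\emptyset)=0$, $t_1,\ldots,t_k\in V$ distinct, and $\mathbf{x}=(x_{i,j})_{i\in[k],j\in V}$ with $x_{i,j}\ge0$, $\sum_{i=1}^k x_{i,j}=1$ for all $j\in V$, and $x_{i,t_i}=1$ for all $i$. For $\theta\in[0,1]$ let $A_i(\theta)=\{j: x_{i,j}>\theta\}$ and $B(\theta)=\{j: 1-\max_i x_{i,j}\ge\theta\}$. Then $$\sum_{i=1}^k\int_0^{1/2} f(A_i(\theta))\,d\theta\ \ge\ \sum_{i=1}^k\int_0^{1/2} f(A_i(\theta)\cup B(\theta))\,d\theta-(k-2)\int_0^{1/2} f(B(\theta))\,d\theta.$$ *)

From Stdlib Require Import Reals.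
From Coquelicot Require Import Coquelicot.
From mathcomp Require Import all_boot.
Set Implicit Arguments. Unset Strict Implicit. Unset Printing Implicit Defensive.

Open Scope R_scope.

Definition Rltb (a b : R) : bool := if Rlt_dec a b then true else false.
Definition Rleb (a b : R) : bool := if Rle_dec a b then true else false.

Definition Rsum (k : nat) (F : 'I_k -> R) : R := \big[Rplus/0]_(i < k) F i.
Definition Rmaxi (k : nat) (F : 'I_k -> R) : R := \big[Rmax/0]_(i < k) F i.

Definition submodular (V : finType) (f : {set V} -> R) : Prop :=
  forall A B : {set V}, f (A :|: B) + f (A :&: B) <= f A + f B.

Definition Aset (V : finType) (k : nat) (x : 'I_k -> V -> R) (i : 'I_k) (th : R)
  : {set V} := [set j | Rltb th (x i j)].

Definition Bset (V : finType) (k : nat) (x : 'I_k -> V -> R) (th : R) : {set V} :=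
  [set j | Rleb th (1 - Rmaxi (fun i => x i j))].

(* Order V by decreasing c j = 1 - max_i x i j and let y j be the marginal value of j over
   its predecessors. By submodularity, the sum of y over any set S is at most f S, with
   equality on initial segments, and every B(theta) is an initial segment. Integrating over
   theta in [0, 1/2], the element j contributes y j * min (x i j) (c j) (1/2) to the integral
   of f (A_i(theta) :&: B(theta)), and these contributions sum over i to
   2 * y j * min (c j) (1/2), its contribution to twice the integral of f (B(theta)). Adding
   f (A :|: B) + f (A :&: B) <= f A + f B over i gives the theorem. *)

From HB Require Import structures.

From Stdlib Require Import Reals Lra.
From Coquelicot Require Import Coquelicot.
From mathcomp Require Import all_boot.

Set Implicit Arguments.
Unset Strict Implicit.
Unset Printing Implicit Defensive.

Open Scope R_scope.

HB.instance Definition _ := Monoid.isComLaw.Build R 0 Rplus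
  (fun a b c => esym (Rplus_assoc a b c)) Rplus_comm Rplus_0_l.
HB.instance Definition _ := Monoid.isMulLaw.Build R 0 Rmult Rmult_0_l Rmult_0_r.
HB.instance Definition _ :=
  Monoid.isAddLaw.Build R Rmult Rplus Rmult_plus_distr_r Rmult_plus_distr_l.

Lemma RltbP a b : reflect (a < b) (Rltb a b).
Proof. by rewrite /Rltb; case: Rlt_dec => h; constructor. Qed.

Lemma RlebP a b : reflect (a <= b) (Rleb a b).
Proof. by rewrite /Rleb; case: Rle_dec => h; constructor. Qed.

Lemma Rmin_Rmax_open a b t : a <= b -> Rmin a b < t < Rmax a b -> a < t < b.
Proof. by move=> ab; rewrite Rmin_left ?Rmax_right. Qed.

Lemma ex_RInt_step (I : eqType) (p : I -> R) (h : R -> R) (s : seq I) :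
  forall a b, a <= b ->
  (forall t1 t2, a < t1 -> t1 <= t2 -> t2 < b ->
     (forall i, i \in s -> ~ t1 <= p i <= t2) -> h t1 = h t2) ->
  ex_RInt h a b.
Proof.
elim: s => [|i s IH] a b ab hconst.
  have [<-|ne] := Req_dec a b; first exact: ex_RInt_point.
  apply: (ex_RInt_ext (fun=> h ((a + b) / 2))); last exact: ex_RInt_const.
  move=> t /(Rmin_Rmax_open ab) ht.
  case: (Rle_dec t ((a + b) / 2)) => tm; [symmetry|]; apply: hconst; try lra; by [].
have restrict a' b' : a <= a' -> b' <= b -> ~ a' < p i < b' ->
    forall t1 t2, a' < t1 -> t1 <= t2 -> t2 < b' ->
    (forall i', i' \in s -> ~ t1 <= p i' <= t2) -> h t1 = h t2.
  move=> aa' bb' out t1 t2 ? ? ? avoid; apply: hconst; try lra.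
  by move=> i'; rewrite in_cons => /orP[/eqP-> | /avoid//]; lra.
case: (Rlt_dec a (p i)) => ai; case: (Rlt_dec (p i) b) => ib.
- by apply: (ex_RInt_Chasles _ _ (p i)); apply: IH; try apply: restrict; lra.
all: by apply: IH => //; apply: restrict; lra.
Qed.

Definition piecewise_constant (I : finType) (p : I -> R) (T : Type) (g : R -> T) :=
  forall t1 t2, t1 <= t2 -> (forall i, ~ t1 <= p i <= t2) -> g t1 = g t2.

Lemma ex_RInt_piecewise_constant (I : finType) (p : I -> R) (h : R -> R) a b :
  a <= b -> piecewise_constant p h -> ex_RInt h a b.
Proof.
move=> ab hconst; apply: (@ex_RInt_step _ p h (enum I)) => // t1 t2 _ t12 _ avoid.
by apply: hconst => // i; apply: avoid; rewrite mem_enum.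
Qed.

Lemma RInt_indicator (P : R -> bool) v a m b : a <= m <= b ->
  (forall t, a < t < m -> P t) -> (forall t, m < t < b -> ~~ P t) ->
  RInt (fun t => if P t then v else 0) a b = v * (m - a).
Proof.
move=> amb below above.
have on_left : forall t, Rmin a m < t < Rmax a m -> (if P t then v else 0) = v.
  by move=> t /Rmin_Rmax_open ht; rewrite below //; apply: ht; lra.
have on_right : forall t, Rmin m b < t < Rmax m b -> (if P t then v else 0) = 0.
  by move=> t /Rmin_Rmax_open ht; rewrite (negbTE (above t _)) //; apply: ht; lra.
rewrite -(RInt_Chasles _ a m b).
- rewrite (RInt_ext _ _ _ _ on_left) (RInt_ext _ _ _ _ on_right) !RInt_const.
  rewrite /plus /scal /= /mult /=; ring.
- by apply: (ex_RInt_ext (fun=> v)) (ex_RInt_const _ _ _) => t /on_left.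
- by apply: (ex_RInt_ext (fun=> 0)) (ex_RInt_const _ _ _) => t /on_right.
Qed.

Lemma RInt_big (I : Type) (r : seq I) (F : I -> R -> R) a b :
  (forall j, ex_RInt (F j) a b) ->
  ex_RInt (fun t => \big[Rplus/0]_(j <- r) F j t) a b /\
  RInt (fun t => \big[Rplus/0]_(j <- r) F j t) a b = \big[Rplus/0]_(j <- r) RInt (F j) a b.
Proof.
move=> exF; elim: r => [|j r [exr IH]].
  rewrite big_nil (RInt_ext _ (fun=> 0)) => [|t _]; last by rewrite big_nil.
  split; last by rewrite RInt_const /scal /= /mult /=; ring.
  by apply: (ex_RInt_ext (fun=> 0)) (ex_RInt_const _ _ _) => t _; rewrite big_nil.
pose G t := plus (F j t) (\big[Rplus/0]_(j <- r) F j t).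
rewrite big_cons -IH (RInt_ext _ G) => [|t _]; last by rewrite big_cons.
split; last exact: RInt_plus.
by apply: (ex_RInt_ext G) => [t _|]; [rewrite big_cons | exact: ex_RInt_plus].
Qed.

Lemma RInt_big_in (V : finType) (S : R -> {set V}) (w : V -> R) a b :
  (forall j, ex_RInt (fun t => if j \in S t then w j else 0) a b) ->
  RInt (fun t => \big[Rplus/0]_(j in S t) w j) a b =
  \big[Rplus/0]_j RInt (fun t => if j \in S t then w j else 0) a b.
Proof.
move=> exS; rewrite -(proj2 (RInt_big _ exS)).
by apply: RInt_ext => t _; rewrite big_mkcond.
Qed.

Lemma RInt_add_le (g1 g2 h1 h2 : R -> R) a b : a <= b ->
  ex_RInt g1 a b -> ex_RInt g2 a b -> ex_RInt h1 a b -> ex_RInt h2 a b ->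
  (forall t, a < t < b -> g1 t + g2 t <= h1 t + h2 t) ->
  RInt g1 a b + RInt g2 a b <= RInt h1 a b + RInt h2 a b.
Proof.
move=> ab ex1 ex2 ex3 ex4 le.
rewrite -[_ + RInt g2 a b](RInt_plus g1 g2) // -[_ + RInt h2 a b](RInt_plus h1 h2) //.
by apply: RInt_le => //; apply: ex_RInt_plus.
Qed.

Section FiniteSums.
Variables (k : nat) (X : 'I_k -> R).

Lemma Rsum_le (Y : 'I_k -> R) : (forall i, X i <= Y i) -> Rsum X <= Rsum Y.
Proof. by move=> le; apply: (big_ind2 Rle) => [|*|i _]; [lra | lra | apply: le]. Qed.

Lemma Rsum_add (Y : 'I_k -> R) : Rsum (fun i => X i + Y i) = Rsum X + Rsum Y.
Proof. exact: big_split. Qed.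

Lemma Rsum_const (b : R) : Rsum (fun _ : 'I_k => b) = INR k * b.
Proof.
rewrite /Rsum big_const_ord; elim: (k) => [|n IHn]; first by rewrite /=; ring.
by rewrite iterS IHn S_INR; ring.
Qed.

Lemma Rmaxi_ub i : X i <= Rmaxi X.
Proof.
rewrite /Rmaxi; elim: (index_enum _) (mem_index_enum i) => // j s IH.
rewrite big_cons in_cons => /orP[/eqP<- | /IH le]; first exact: Rmax_l.
exact: Rle_trans le (Rmax_r _ _).
Qed.

Lemma Rmaxi_cases : Rmaxi X = 0 \/ exists i, Rmaxi X = X i.
Proof.
pose P v := v = 0 \/ exists i, v = X i.
apply: (big_ind P) => [|u v|i _]; [by left | exact: Rmax_case | by right; exists i].
Qed.

Hypotheses (X_ge0 : forall i, 0 <= X i) (X_sum1 : Rsum X = 1).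

Lemma big_Rplus_ge0 (P : pred 'I_k) : 0 <= \big[Rplus/0]_(i < k | P i) X i.
Proof. by apply: (big_ind (Rle 0)) => [|*|i _]; [lra | lra | apply: X_ge0]. Qed.

Lemma Rsum_ge_pair i0 i : i != i0 -> X i0 + X i <= Rsum X.
Proof.
move=> ne; rewrite /Rsum (bigD1 i0) //= (bigD1 i) //= -Rplus_assoc.
by rewrite -{1}[X i0 + X i]Rplus_0_r; apply: Rplus_le_compat_l; apply: big_Rplus_ge0.
Qed.

Lemma Rmaxi_attained : exists i, Rmaxi X = X i.
Proof.
case: Rmaxi_cases => [max0|//]; exfalso.
have X0 i : X i = 0 by have := Rmaxi_ub i; have := X_ge0 i; lra.
by move: X_sum1; rewrite /Rsum big1 //; lra.
Qed.

Lemma Rmaxi_le1 : Rmaxi X <= 1.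
Proof.
have [i0 ->] := Rmaxi_attained; rewrite -X_sum1 /Rsum (bigD1 i0) //=.
by rewrite -{1}[X i0]Rplus_0_r; apply: Rplus_le_compat_l; apply: big_Rplus_ge0.
Qed.

(* Every mass but the largest one, M, is at most min M (1 - M) <= 1/2, so only M is clipped. *)
Lemma Rsum_Rmin_complement_max :
  Rsum (fun i => Rmin (X i) (Rmin (1 - Rmaxi X) (1/2))) = 2 * Rmin (1 - Rmaxi X) (1/2).
Proof.
set d := Rmin _ _; have [i0 max_i0] := Rmaxi_attained.
have others (i : 'I_k) : i != i0 -> Rmin (X i) d = X i.
  move=> ne; have := Rsum_ge_pair ne; have := Rmaxi_ub i; rewrite /d /Rmin.
  by repeat case: Rle_dec; lra.
move: X_sum1; rewrite /Rsum (bigD1 i0) //= => sum1.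
rewrite (bigD1 i0) //=; under eq_bigr => i ne do rewrite others //.
by rewrite /d max_i0 /Rmin; repeat case: Rle_dec; lra.
Qed.

End FiniteSums.

Section GreedyDecomposition.
Variables (V : finType) (prec : rel V).
Hypotheses (prec_irr : irreflexive prec) (prec_trans : transitive prec)
  (prec_total : forall a b, a != b -> prec a b || prec b a).

Lemma cardsD1S (A : {set V}) x n : x \in A -> #|A| = n.+1 -> #|A :\ x| = n.
Proof. by move=> xA cardA; move: (cardsD1 x A); rewrite xA cardA => -[]. Qed.

Lemma prec_max_exists n (S : {set V}) : #|S| = n.+1 ->
  exists2 l, l \in S & {in S :\ l, forall j, prec j l}.
Proof.
elim: n S => [|n IH] S cardS.
  have [a ->] : exists a, S = [set a] by apply/cards1P/eqP.
  by exists a; [exact: set11 | rewrite setDv => j; rewrite inE].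
have [a aS] : exists a, a \in S by apply/card_gt0P; rewrite cardS.
have [|l lS lmax] := IH (S :\ a); first exact: cardsD1S.
have la : l != a by move: lS; rewrite in_setD1 => /andP[].
have [al|nal] := boolP (prec a l).
  exists l; first by move: lS; rewrite in_setD1 => /andP[].
  move=> j; rewrite in_setD1 => /andP[jl jS].
  have [->//|ja] := eqVneq j a; apply: lmax; by rewrite !in_setD1 jl ja.
have la' : prec l a by move: (prec_total la); rewrite (negbTE nal) orbF.
exists a => // j; rewrite in_setD1 => /andP[ja jS].
have [->//|jl] := eqVneq j l; apply: prec_trans la'; apply: lmax.
by rewrite !in_setD1 jl ja.
Qed.

Variable f : {set V} -> R.
Hypotheses (f_sub : submodular f) (f0 : f set0 = 0).

Definition prec_set l := [set j | prec j l].
Definition marginal l := f (l |: prec_set l) - f (prec_set l).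

Section MaxElement.
Variables (S : {set V}) (l : V).
Hypotheses (lS : l \in S) (lmax : {in S :\ l, forall j, prec j l}).

Lemma setI_prec_set_max : S :&: prec_set l = S :\ l.
Proof.
apply/setP => j; rewrite in_setI in_setD1 inE.
have [->|jl] := eqVneq j l; first by rewrite prec_irr andbF.
by case jS: (j \in S) => //=; apply: lmax; rewrite in_setD1 jl jS.
Qed.

Lemma setU_prec_set_max : S :|: prec_set l = l |: prec_set l.
Proof.
apply/setP => j; rewrite in_setU in_setU1 inE.
have [->|jl] := eqVneq j l; first by rewrite lS.
by case jS: (j \in S) => //=; rewrite lmax // in_setD1 jl jS.
Qed.

End MaxElement.

Lemma sum_marginal_le (S : {set V}) : \big[Rplus/0]_(j in S) marginal j <= f S.
Proof.
move: {2}#|S| (erefl #|S|) => n; elim: n S => [|n IH] S cardS.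
  by move/eqP: cardS; rewrite cards_eq0 => /eqP->; rewrite big_set0 f0; lra.
have [l lS lmax] := prec_max_exists cardS.
rewrite (big_setD1 _ lS) /=.
have := f_sub S (prec_set l).
rewrite setI_prec_set_max // setU_prec_set_max //.
have := IH _ (cardsD1S lS cardS); rewrite /marginal; lra.
Qed.

Lemma sum_marginal_eq (T : {set V}) : {in T, forall j j', prec j' j -> j' \in T} ->
  \big[Rplus/0]_(j in T) marginal j = f T.
Proof.
move: {2}#|T| (erefl #|T|) => n; elim: n T => [|n IH] T cardT down.
  by move/eqP: cardT; rewrite cards_eq0 => /eqP->; rewrite big_set0 f0.
have [l lT lmax] := prec_max_exists cardT.
have Tl : T :\ l = prec_set l.
  apply/setP => j; rewrite in_setD1 inE.
  have [->|jl] := eqVneq j l; first by rewrite prec_irr.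
  by apply/idP/idP => [jT | /(down l lT)]; first apply: lmax; rewrite ?in_setD1 ?jl.
rewrite (big_setD1 _ lT) /= Tl IH; first by rewrite -(setD1K lT) Tl /marginal; ring.
  by rewrite -Tl; exact: cardsD1S.
by move=> j; rewrite inE => jl j' j'j; rewrite inE; apply: prec_trans j'j jl.
Qed.

End GreedyDecomposition.

Section DecreasingOrder.
Variables (V : finType) (c : V -> R).

(* Ties in [c] are broken by [enum_rank], so that the sets [{j | theta <= c j}] are initial
   segments of one strict total order. *)
Definition prec_desc : rel V := fun a b =>
  Rltb (c b) (c a) || ~~ Rltb (c a) (c b) && (enum_rank a < enum_rank b)%N.

Lemma prec_descP a b :
  prec_desc a b <-> c b < c a \/ c a = c b /\ (enum_rank a < enum_rank b)%N.
Proof.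
rewrite /prec_desc; case: RltbP => ba; case: RltbP => ab /=.
- by exfalso; lra.
- by split=> // _; left.
- by split=> // -[|[]]; lra.
- by split=> [r|[|[]]] //; right; split=> //; lra.
Qed.

Lemma prec_desc_irr : irreflexive prec_desc.
Proof. by move=> a; apply/negP => /prec_descP[|[_]]; [lra | rewrite ltnn]. Qed.

Lemma prec_desc_trans : transitive prec_desc.
Proof.
move=> b a d /prec_descP ab /prec_descP bd; apply/prec_descP.
case: ab => [ab|[ab ab']]; case: bd => [bd|[bd bd']]; try (left; lra).
by right; split; [lra | exact: ltn_trans ab' bd'].
Qed.

Lemma prec_desc_total a b : a != b -> prec_desc a b || prec_desc b a.
Proof.
move=> ne; apply/orP; rewrite !prec_descP.
have [ab|[ab|ab]] := Rtotal_order (c a) (c b); try (by right; left); try (by left; left).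
have rk : val (enum_rank a) != val (enum_rank b).
  by rewrite (inj_eq val_inj); apply: contra ne => /eqP/enum_rank_inj->.
by case: ltngtP rk => // r _; [left | right]; right; split.
Qed.

Lemma prec_desc_le a b : prec_desc a b -> c b <= c a.
Proof. by case/prec_descP => [|[]]; lra. Qed.

End DecreasingOrder.

Section ThresholdSets.
Variables (V : finType) (f : {set V} -> R) (k : nat) (x : 'I_k -> V -> R).
Hypotheses (f_sub : submodular f) (f0 : f set0 = 0)
  (x_nonneg : forall i j, 0 <= x i j) (x_sum : forall j, Rsum (fun i => x i j) = 1).

Let c j := 1 - Rmaxi (fun i => x i j).
Let d j := Rmin (c j) (1/2).
Let y := marginal (prec_desc c) f.
Let breakpoint (ij : option 'I_k * V) := if ij.1 is Some i then x i ij.2 else c ij.2.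

Lemma c_ge0 j : 0 <= c j.
Proof. by have := Rmaxi_le1 (x_nonneg^~ j) (x_sum j); rewrite /c; lra. Qed.

Lemma Aset_piecewise_constant i : piecewise_constant breakpoint (Aset x i).
Proof.
move=> t1 t2 t12 avoid; apply/setP => j; rewrite !inE.
have out := avoid (Some i, j); rewrite /breakpoint /= in out.
by case: RltbP => ?; case: RltbP => ? //; exfalso; apply: out; lra.
Qed.

Lemma Bset_piecewise_constant : piecewise_constant breakpoint (Bset x).
Proof.
move=> t1 t2 t12 avoid; apply/setP => j; rewrite !inE.
have out := avoid (None, j); rewrite /breakpoint /c /= in out.
by case: RlebP => ?; case: RlebP => ? //; exfalso; apply: out; lra.
Qed.

Lemma ex_RInt_Aset_Bset (G : {set V} -> {set V} -> R) i :
  ex_RInt (fun t => G (Aset x i t) (Bset x t)) 0 (1/2).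
Proof.
apply: (ex_RInt_piecewise_constant (p := breakpoint)); first lra.
move=> t1 t2 t12 avoid.
by rewrite (Aset_piecewise_constant i t12 avoid) (Bset_piecewise_constant t12 avoid).
Qed.

Lemma ex_RInt_Bset (G : {set V} -> R) : ex_RInt (fun t => G (Bset x t)) 0 (1/2).
Proof.
apply: (ex_RInt_piecewise_constant (p := breakpoint)); first lra.
by move=> t1 t2 t12 avoid; rewrite (Bset_piecewise_constant t12 avoid).
Qed.

Lemma f_Bset_sum_marginal t : f (Bset x t) = \big[Rplus/0]_(j in Bset x t) y j.
Proof.
symmetry; apply: (sum_marginal_eq _ _ _ f0).
- exact: prec_desc_irr.
- exact: prec_desc_trans.
- exact: prec_desc_total.
move=> j; rewrite inE => /RlebP tj j' /prec_desc_le j'j; rewrite inE; apply/RlebP.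
by rewrite /c in j'j; lra.
Qed.

Lemma RInt_Aset_Bset_indicator i j v :
  RInt (fun t => if j \in Aset x i t :&: Bset x t then v else 0) 0 (1/2)
  = v * Rmin (x i j) (d j).
Proof.
have := c_ge0 j; have := x_nonneg i j; rewrite /d /c => ? ?.
rewrite -[Rmin _ _]Rminus_0_r /Rmin.
case: (Rle_dec (1 - _) (1/2)) => ?; case: Rle_dec => ?.
all: apply: RInt_indicator => [|t ht|t ht]; rewrite ?in_setI ?inE; try lra.
all: try by apply/andP; split; [apply/RltbP | apply/RlebP]; lra.
all: by apply/negP => /andP[/RltbP ? /RlebP ?]; lra.
Qed.

Lemma RInt_Bset_indicator j v :
  RInt (fun t => if j \in Bset x t then v else 0) 0 (1/2) = v * d j.
Proof.
have := c_ge0 j; rewrite /d /c => ?.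
rewrite -[Rmin _ _]Rminus_0_r /Rmin; case: Rle_dec => ?.
all: apply: RInt_indicator => [|t ht|t ht]; rewrite ?inE; try lra.
all: try by apply/RlebP; lra.
all: by apply/negP => /RlebP; lra.
Qed.

Lemma RInt_sum_marginal_Aset_Bset i :
  RInt (fun t => \big[Rplus/0]_(j in Aset x i t :&: Bset x t) y j) 0 (1/2)
  = \big[Rplus/0]_j (y j * Rmin (x i j) (d j)).
Proof.
rewrite RInt_big_in => [|j]; last first.
  exact: (ex_RInt_Aset_Bset (fun A B => if j \in A :&: B then y j else 0)).
by apply: eq_bigr => j _; rewrite RInt_Aset_Bset_indicator.
Qed.

Lemma RInt_f_Bset : RInt (fun t => f (Bset x t)) 0 (1/2) = \big[Rplus/0]_j (y j * d j).
Proof.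
rewrite (RInt_ext _ (fun t => \big[Rplus/0]_(j in Bset x t) y j)) => [|t _]; last first.
  exact: f_Bset_sum_marginal.
rewrite RInt_big_in => [|j]; last first.
  exact: (ex_RInt_Bset (fun B => if j \in B then y j else 0)).
by apply: eq_bigr => j _; rewrite RInt_Bset_indicator.
Qed.

Lemma RInt_f_Bset_le :
  2 * RInt (fun t => f (Bset x t)) 0 (1/2)
  <= Rsum (fun i => RInt (fun t => f (Aset x i t :&: Bset x t)) 0 (1/2)).
Proof.
have lower i : \big[Rplus/0]_j (y j * Rmin (x i j) (d j))
    <= RInt (fun t => f (Aset x i t :&: Bset x t)) 0 (1/2).
  rewrite -RInt_sum_marginal_Aset_Bset; apply: RInt_le => [|||t _]; first lra.
  - exact: (ex_RInt_Aset_Bset (fun A B => \big[Rplus/0]_(j in A :&: B) y j)).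
  - exact: (ex_RInt_Aset_Bset (fun A B => f (A :&: B))).
  - apply: (sum_marginal_le _ _ _ f_sub f0);
      [exact: prec_desc_irr | exact: prec_desc_trans | exact: prec_desc_total].
apply: Rle_trans (Rsum_le lower); apply: Req_le.
rewrite RInt_f_Bset big_distrr /Rsum exchange_big /=; apply: eq_bigr => j _.
have := Rsum_Rmin_complement_max (x_nonneg^~ j) (x_sum j).
by rewrite -big_distrr /= /d /c /Rsum => ->; ring.
Qed.

End ThresholdSets.

Theorem lemma6 (V : finType) (f : {set V} -> R) (k : nat)
  (t : 'I_k -> V) (x : 'I_k -> V -> R)
  (f_nonneg : forall A, 0 <= f A)
  (f_sub : submodular f)
  (f0 : f set0 = 0)
  (t_inj : injective t)
  (x_nonneg : forall i j, 0 <= x i j)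
  (x_sum : forall j, Rsum (fun i => x i j) = 1)
  (x_term : forall i, x i (t i) = 1) :
  Rsum (fun i => RInt (fun th => f (Aset x i th)) 0 (1/2))
  >= Rsum (fun i => RInt (fun th => f (Aset x i th :|: Bset x th)) 0 (1/2))
     - (INR k - 2) * RInt (fun th => f (Bset x th)) 0 (1/2).
Proof.
have inter_ge := RInt_f_Bset_le f_sub f0 x_nonneg x_sum.
have union_le i :
    RInt (fun th => f (Aset x i th :|: Bset x th)) 0 (1/2)
    + RInt (fun th => f (Aset x i th :&: Bset x th)) 0 (1/2)
    <= RInt (fun th => f (Aset x i th)) 0 (1/2) + RInt (fun th => f (Bset x th)) 0 (1/2).
  apply: RInt_add_le => [|||||th _]; first lra; last exact: f_sub.
  - exact: (ex_RInt_Aset_Bset x (fun A B => f (A :|: B))).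
  - exact: (ex_RInt_Aset_Bset x (fun A B => f (A :&: B))).
  - exact: (ex_RInt_Aset_Bset x (fun A B => f A)).
  - exact: (ex_RInt_Bset x f).
have := Rsum_le union_le; rewrite !Rsum_add Rsum_const; lra.
Qed.
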